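(* Let $S$ be a finite semigroup such that $\equiv_{\mathsf{RM}}$ is the equality relation. If the action of $S$ on a partial $S$-set $\Omega$ is faithful, then so is the action of $S$ on its semisimplification $\Omega_{ss}$. Moreover, $|\Omega_{ss}|\le|\Omega|$.
   Context: Semigroups act on the right. A regular $\mathscr J$-class is one containing an idempotent. For a regular $\mathscr J$-class $J$: $s\equiv_{\mathsf{RM},J}t$ iff for all $x\in J$, $xs\in J\iff xt\in J$, and if both lie in $J$ then $xs=xt$; $\equiv_{\mathsf{RM}}=\bigcap_J\equiv_{\mathsf{RM},J}$ over regular $J$. A partial $S$-set is a finite set $\Omega$ with a right action by partial maps; faithful means distinct elements act as distinct partial maps. The strong orbit of $\alpha$ is $\mathscr O_\alpha=\{\beta\in\Omega\mid\alpha S^1=\beta S^1\}$; it is null if $\mathscr O_\alpha S\cap\mathscr O_\alpha=\emptyset$ and transitive otherwise. The semisimplification $\Omega_{ss}$ is the set $\{\alpha\in\Omega\mid\alpha\in\alpha S\}$ (the union of transitive strong orbits) with action $\alpha\circ s=\alpha s$ if $\alpha s$ is defined and lies in $\mathscr O_\alpha$, and undefined otherwise. *)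

From mathcomp Require Import all_boot.
Set Implicit Arguments. Unset Strict Implicit. Unset Printing Implicit Defensive.

Section Semigroup.
Variables (S : finType) (mul : S -> S -> S).

(* multiplication by an element of S^1 = S + {1}, encoded as option S *)
Definition lmul1 (a : option S) (s : S) : S := if a is Some a' then mul a' s else s.
Definition rmul1 (s : S) (b : option S) : S := if b is Some b' then mul s b' else s.

Definition in_ideal (s x : S) : bool :=
  [exists a : option S, exists b : option S, x == rmul1 (lmul1 a s) b].

Definition Jrel (s t : S) : bool := [forall x, in_ideal s x == in_ideal t x].

Definition idempotent (e : S) : bool := mul e e == e.

Definition RM_J (e s t : S) : Prop :=
  forall x, Jrel x e ->
    (Jrel (mul x s) e <-> Jrel (mul x t) e) /\
    (Jrel (mul x s) e -> Jrel (mul x t) e -> mul x s = mul x t).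

(* ==_RM is the intersection over regular J-classes, i.e. J-classes of
   idempotents (a J-class is regular iff it contains an idempotent). *)
Definition RM_rel (s t : S) : Prop :=
  forall e, idempotent e -> RM_J e s t.

Definition RM_is_equality : Prop := forall s t, RM_rel s t -> s = t.

End Semigroup.

Section PartialSet.
Variables (S : finType) (mul : S -> S -> S) (Omega : finType)
          (act : Omega -> S -> option Omega).

Definition is_partial_action : Prop :=
  forall a s t, act a (mul s t) = obind (fun b => act b t) (act a s).

Definition faithful_on (D : {set Omega}) (f : Omega -> S -> option Omega) : Prop :=
  forall s t, (forall a, a \in D -> f a s = f a t) -> s = t.

Definition faithful : Prop := faithful_on [set: Omega] act.

Definition reach (a b : Omega) : bool := (a == b) || [exists s, act a s == Some b].

Definition same_strong_orbit (a b : Omega) : bool :=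
  [forall c, reach a c == reach b c].

Definition Omega_ss : {set Omega} := [set a | [exists s, act a s == Some a]].

Definition act_ss (a : Omega) (s : S) : option Omega :=
  match act a s with
  | Some b => if same_strong_orbit a b then Some b else None
  | None => None
  end.

End PartialSet.

(** If [x] is J-equivalent to [x s] in a finite semigroup, then [x] already lies
    in the right ideal [x s S^1]: writing [x = a x f] with [f = s b], the map
    [z |-> z f] must cycle on [x].  Now if [α x = β], then [x = (x s) c] forces
    [β s = γ] with [γ c = β], so [β] lies in [Ω_ss] and [γ] in its strong orbit;
    a transformation [t] agreeing with [s] on [Ω_ss] thus satisfies [β t = γ]
    as well.  Hence [x s] and [x t] act identically on [Ω], so they are equal by
    faithfulness, and this is exactly what [≡_RM] needs to identify [s] and
    [t]. *)

From mathcomp Require Import all_boot.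
Set Implicit Arguments. Unset Strict Implicit. Unset Printing Implicit Defensive.

Lemma iter_cycle_of_commuting_retraction (T : finType) (A F : T -> T) x :
  (forall z, F (A z) = A (F z)) -> A (F x) = x ->
  exists2 p, 0 < p & iter p F x = x.
Proof.
move=> FA AFx.
have FnA n z : iter n F (A z) = A (iter n F z) by elim: n => //= n ->.
have FnAm n m z : iter n F (iter m A z) = iter m A (iter n F z).
  by elim: m => //= m <-; rewrite FnA.
have AnFn n : iter n A (iter n F x) = x.
  by elim: n => // n IHn; rewrite !iterSr -FnA AFx.
case/trajectP: (looping_order F x) => i lt_i_ord Fi.
exists (order F x - i); first by rewrite subn_gt0.
by rewrite -[X in iter _ F X = _](AnFn i) FnAm -iterD subnK ?(ltnW lt_i_ord) // Fi AnFn.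
Qed.

Section Semigroup.
Variables (S : finType) (mul : S -> S -> S).
Hypothesis mulA : associative mul.

Lemma Jrel_sym u v : Jrel mul u v -> Jrel mul v u.
Proof. by move=> /forallP Juv; apply/forallP => y; rewrite eq_sym Juv. Qed.

Lemma Jrel_trans u v w : Jrel mul u v -> Jrel mul v w -> Jrel mul u w.
Proof.
move=> /forallP Juv /forallP Jvw; apply/forallP => y.
by rewrite (eqP (Juv y)) (eqP (Jvw y)).
Qed.

Lemma in_ideal_of_Jrel u v : Jrel mul u v -> in_ideal mul u v.
Proof.
move=> /forallP /(_ v) /eqP ->.
by apply/existsP; exists None; apply/existsP; exists None.
Qed.

Lemma mul_rmul1 y c u : mul (rmul1 mul y c) u = mul y (lmul1 mul c u).
Proof. by case: c => //= c; rewrite mulA. Qed.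

Lemma rmul1_mul x s c : rmul1 mul (mul x s) c = mul x (rmul1 mul s c).
Proof. by case: c => //= c; rewrite mulA. Qed.

Lemma lmul1_mul a z u : lmul1 mul a (mul z u) = mul (lmul1 mul a z) u.
Proof. by case: a => //= a; rewrite mulA. Qed.

Lemma lmul1_rmul1 a z c : lmul1 mul a (rmul1 mul z c) = rmul1 mul (lmul1 mul a z) c.
Proof. by case: a => //= a; case: c => //= c; rewrite mulA. Qed.

Lemma Jrel_mulr_in_right_ideal x s :
  Jrel mul (mul x s) x -> exists c, x = rmul1 mul (mul x s) c.
Proof.
case/in_ideal_of_Jrel/existsP => a /existsP [b /eqP def_x].
pose f := rmul1 mul s b; pose F z := mul z f.
have Fx : F x = rmul1 mul (mul x s) b by rewrite rmul1_mul.
have FA z : F (lmul1 mul a z) = lmul1 mul a (F z) by rewrite /F lmul1_mul.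
have AFx : lmul1 mul a (F x) = x by rewrite Fx lmul1_rmul1 -def_x.
have [[//|p] _ Fpx] := iter_cycle_of_commuting_retraction FA AFx.
rewrite -{1}Fpx iterSr Fx; elim: p {Fpx} => [|p [c IHc]]; first by exists b.
by exists (Some (lmul1 mul c f)); rewrite iterS IHc /F mul_rmul1.
Qed.

Lemma RM_rel_of_Jrel_mulr s t :
  (forall x, Jrel mul (mul x s) x -> mul x s = mul x t) ->
  (forall x, Jrel mul (mul x t) x -> mul x t = mul x s) ->
  RM_rel mul s t.
Proof.
move=> eq_st eq_ts e _ x Jxe; have Jex := Jrel_sym Jxe.
split; last by move=> Jxs _; apply: eq_st; apply: Jrel_trans Jxs Jex.
by split=> J; [rewrite -eq_st | rewrite -eq_ts] => //; apply: Jrel_trans J Jex.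
Qed.

End Semigroup.

Section PartialAction.
Variables (S : finType) (mul : S -> S -> S) (Omega : finType)
  (act : Omega -> S -> option Omega).
Hypothesis actM : is_partial_action mul act.

Definition act1 (a : Omega) (c : option S) : option Omega :=
  if c is Some c' then act a c' else Some a.

Lemma act_rmul1 a z c :
  act a (rmul1 mul z c) = obind (act1^~ c) (act a z).
Proof. by case: c => [c|] /=; rewrite ?actM //; case: (act a z). Qed.

Lemma reach_refl a : reach act a a.
Proof. by rewrite /reach eqxx. Qed.

Lemma reach_act a s b : act a s = Some b -> reach act a b.
Proof. by move=> abs; apply/orP; right; apply/existsP; exists s; rewrite abs. Qed.

Lemma reach_act1 a c b : act1 a c = Some b -> reach act a b.
Proof. by case: c => [c /reach_act //|[<-]]; apply: reach_refl. Qed.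

Lemma same_strong_orbit_of_reach a b :
  reach act a b -> reach act b a -> same_strong_orbit act a b.
Proof.
have reach_trans u v w : reach act u v -> reach act v w -> reach act u w.
  case/orP => [/eqP -> //| /existsP [s /eqP uvs]].
  case/orP => [/eqP <- | /existsP [s' /eqP vws]]; first exact: reach_act uvs.
  by apply: (@reach_act _ (mul s s')); rewrite actM uvs.
move=> ab ba; apply/forallP => c; apply/eqP; apply/idP/idP; exact: reach_trans.
Qed.

Lemma mem_Omega_ss_of_return a s b : act a s = Some b -> reach act b a ->
  a \in Omega_ss act.
Proof.
move=> abs; rewrite inE; case/orP => [/eqP ba | /existsP [u /eqP bau]].
  by apply/existsP; exists s; rewrite abs ba.
by apply/existsP; exists (mul s u); rewrite actM abs /= bau.
Qed.

Lemma act_ss_of_return a s b : act a s = Some b -> reach act b a ->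
  act_ss act a s = Some b.
Proof. by move=> abs ba; rewrite /act_ss abs same_strong_orbit_of_reach ?(reach_act abs). Qed.

Lemma act_of_act_ss a s b : act_ss act a s = Some b -> act a s = Some b.
Proof. by rewrite /act_ss; case: (act a s) => // c; case: ifP. Qed.

Lemma act_mulr_eq_of_ss_agree s t :
  {in Omega_ss act, forall a, act_ss act a s = act_ss act a t} ->
  forall x, (exists c, x = rmul1 mul (mul x s) c) ->
  forall a, act a (mul x s) = act a (mul x t).
Proof.
move=> st x [c def_x] a; rewrite !actM.
case ax: (act a x) => [b|] //=.
have := ax; rewrite {1}def_x act_rmul1 actM ax /=.
case bs: (act b s) => [g|] //= /reach_act1 gb.
have bss := mem_Omega_ss_of_return bs gb.
by apply/esym/act_of_act_ss; rewrite -(st b bss) (act_ss_of_return bs gb).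
Qed.

Lemma faithful_mulr_eq_of_ss_agree s t :
  associative mul -> faithful act ->
  {in Omega_ss act, forall a, act_ss act a s = act_ss act a t} ->
  forall x, Jrel mul (mul x s) x -> mul x s = mul x t.
Proof.
move=> mulA faithful_act st x /(Jrel_mulr_in_right_ideal mulA) x_in_xsS.
by apply: faithful_act => a _; apply: act_mulr_eq_of_ss_agree st x x_in_xsS a.
Qed.

End PartialAction.

Theorem proposition2p2 (S : finType) (mul : S -> S -> S)
  (mulA : associative mul)
  (Omega : finType) (act : Omega -> S -> option Omega)
  (Hact : is_partial_action mul act) :
  RM_is_equality mul ->
  faithful act ->
  faithful_on (Omega_ss act) (act_ss act) /\ #|Omega_ss act| <= #|Omega|.
Proof.
move=> RM_eq faithful_act; split; last exact: max_card.
move=> s t st; apply: RM_eq.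
apply: RM_rel_of_Jrel_mulr; apply: (faithful_mulr_eq_of_ss_agree Hact) => //.
by move=> a a_ss; rewrite st.
Qed.
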